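(* Let $P$ be a finite lattice with bottom element $\perp$. Restriction $R\mapsto R|_{P\setminus\{\perp\}}$ is a bijection from the set of transfer systems $R$ on $P$ satisfying $\perp\,R\,a$ for all $a\in P$ onto the set of transfer systems on the poset $P\setminus\{\perp\}$; its inverse sends a transfer system $Q$ on $P\setminus\{\perp\}$ to $Q$ together with all relations $\perp\,\tilde Q\,a$, $a\in P$.
   Context: A transfer system on a finite lattice $(P,\le)$ is a partial order $R$ refining $\le$ closed under restriction: $x\,R\,z$ and $y\le z$ imply $(x\wedge y)\,R\,y$. For a finite poset $(S,\le)$ (not necessarily a lattice), a transfer system on $S$ is a partial order $R$ on $S$ refining $\le$ such that whenever $x\,R\,y$ and $z\le y$, then $w\,R\,z$ for every $w$ that is maximal among common lower bounds of $x$ and $z$ (vacuous if there is none); when $x\wedge z$ exists this agrees with the lattice definition. *)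

From HB Require Import structures.
From mathcomp Require Import all_boot all_order.
Set Implicit Arguments. Unset Strict Implicit. Unset Printing Implicit Defensive.
Import Order.Theory.
Local Open Scope order_scope.

Definition is_partial_order (S : Type) (R : rel S) : Prop :=
  [/\ forall x, R x x,
      forall x y, R x y -> R y x -> x = y &
      forall x y z, R x y -> R y z -> R x z].

Definition transfer_system_lattice (d : Order.disp_t) (L : latticeType d)
    (R : rel L) : Prop :=
  [/\ is_partial_order R,
      forall x y, R x y -> x <= y &
      forall x y z, R x z -> y <= z -> R (x `&` y) y].

Definition max_common_lower (S : Type) (le : rel S) (x z w : S) : Prop :=
  [/\ le w x, le w z &
      forall w', le w' x -> le w' z -> le w w' -> w' = w].

Definition transfer_system_poset (S : Type) (le : rel S) (R : rel S) : Prop :=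
  [/\ is_partial_order R,
      forall x y, R x y -> le x y &
      forall x y z, R x y -> le z y ->
        forall w, max_common_lower le x z w -> R w z].

Definition nonbot (d : Order.disp_t) (P : finTBLatticeType d) : Type :=
  {x : P | x != \bot}.

Definition nonbot_le (d : Order.disp_t) (P : finTBLatticeType d) :
  rel (nonbot P) := fun a b => (val a <= val b).

Definition restr_nonbot (d : Order.disp_t) (P : finTBLatticeType d)
  (R : rel P) : rel (nonbot P) := fun a b => R (val a) (val b).

Definition ext_bot (d : Order.disp_t) (P : finTBLatticeType d)
  (Q : rel (nonbot P)) : rel P :=
  fun x y => (x == \bot) ||
    match @insub _ (fun u : P => u != \bot) (nonbot P) x,
          @insub _ (fun u : P => u != \bot) (nonbot P) y with
    | Some a, Some b => Q a b
    | _, _ => false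
    end.

From mathcomp Require Import all_boot all_order.
Import Order.Theory.
Local Open Scope order_scope.

(* Every element of P is either bot or the value of an element of P \ {bot};
   all statements about ext_bot reduce, by this case split, to statements
   about Q.  The one genuinely order-theoretic input is the description of
   maximal common lower bounds in P \ {bot}: two elements a, b have such a
   bound iff a /\ b <> bot, and then it is unique and equal to a /\ b.  With
   it the restriction axiom of a lattice transfer system (phrased with
   meets) and that of a poset transfer system (phrased with maximal common
   lower bounds) translate into each other. *)

Lemma partial_order_pullback (S T : Type) (f : S -> T) (R : rel T) :
  injective f -> is_partial_order R ->
  is_partial_order (fun a b => R (f a) (f b)).
Proof.
move=> f_inj [Rrefl Ranti Rtrans]; split=> [x|x y Rxy Ryx|x y z].
- exact: Rrefl.
- exact/f_inj/Ranti.
- exact: Rtrans.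
Qed.

Section NonBot.
Variables (d : Order.disp_t) (P : finTBLatticeType d).
Implicit Types (x y z : P) (a b c w : nonbot P) (Q : rel (nonbot P)) (R : rel P).

Definition nonbot_of {x} (x_nbot : x != \bot) : nonbot P :=
  exist (fun u : P => u != \bot) x x_nbot.

Lemma nonbot_cases x : x = \bot \/ exists a : nonbot P, x = val a.
Proof.
have [->|x_nbot] := eqVneq x \bot; first by left.
by right; exists (nonbot_of x_nbot).
Qed.

Lemma max_common_lower_nonbot a b w :
  max_common_lower (@nonbot_le d P) a b w <-> val w = val a `&` val b.
Proof.
rewrite /nonbot_le; split=> [[wa wb wmax]|w_meet].
  have w_le_meet : val w <= val a `&` val b by rewrite lexI wa wb.
  have meet_nbot : val a `&` val b != \bot.
    by apply: contraTneq w_le_meet => ->; rewrite lex0 (valP w).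
  pose m := nonbot_of meet_nbot.
  by rewrite -(wmax m) //= ?leIl ?leIr.
split; rewrite w_meet ?leIl ?leIr // => w' w'a w'b meet_w'.
by apply: val_inj; apply: le_anti; rewrite w_meet meet_w' lexI w'a w'b.
Qed.

Lemma ext_bot_val Q a b : ext_bot Q (val a) (val b) = Q a b.
Proof. by rewrite /ext_bot (negbTE (valP a)) /= !valK. Qed.

Lemma ext_bot_bot Q y : ext_bot Q \bot y.
Proof. by rewrite /ext_bot eqxx. Qed.

Lemma ext_bot_val_bot Q a : ext_bot Q (val a) \bot = false.
Proof.
rewrite /ext_bot (negbTE (valP a)) /= (@insubF _ _ (nonbot P) \bot) ?eqxx //.
by case: insub.
Qed.

(* Restricting any transfer system on P gives one on P \ {bot}: a maximal
   common lower bound there is the meet, to which the lattice restriction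
   axiom applies. *)
Lemma restr_transfer_system R :
  transfer_system_lattice R -> transfer_system_poset (@nonbot_le d P) (restr_nonbot R).
Proof.
move=> [R_po R_le R_restr]; split.
- exact: partial_order_pullback val_inj R_po.
- by move=> a b; apply: R_le.
- move=> a b c Rab cb w /max_common_lower_nonbot w_meet.
  by rewrite /restr_nonbot w_meet; exact: R_restr Rab cb.
Qed.

Lemma ext_bot_partial_order Q : is_partial_order Q -> is_partial_order (ext_bot Q).
Proof.
move=> [Qrefl Qanti Qtrans]; split.
- move=> x; have [->|[a ->]] := nonbot_cases x; first exact: ext_bot_bot.
  by rewrite ext_bot_val.
- move=> x y; have [->|[a ->]] := nonbot_cases x;
    have [->|[b ->]] := nonbot_cases y; rewrite ?ext_bot_val_bot //.
  by rewrite !ext_bot_val => Qab Qba; rewrite (Qanti _ _ Qab Qba).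
- move=> x y z; have [->|[a ->]] := nonbot_cases x; first by move=> _ _; apply: ext_bot_bot.
  have [->|[b ->]] := nonbot_cases y; first by rewrite ext_bot_val_bot.
  have [->|[c ->]] := nonbot_cases z; first by rewrite ext_bot_val_bot.
  by rewrite !ext_bot_val; apply: Qtrans.
Qed.

(* The extension of a transfer system on P \ {bot} is a transfer system on P:
   when x /\ y <> bot, the restriction axiom of Q at its maximal common lower
   bound x /\ y gives the required relation. *)
Lemma ext_bot_transfer_system Q :
  transfer_system_poset (@nonbot_le d P) Q -> transfer_system_lattice (ext_bot Q).
Proof.
move=> [Q_po Q_le Q_restr]; split; first exact: ext_bot_partial_order.
  move=> x y; have [->|[a ->]] := nonbot_cases x; first by rewrite le0x.
  have [->|[b ->]] := nonbot_cases y; first by rewrite ext_bot_val_bot.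
  by rewrite ext_bot_val; apply: Q_le.
move=> x y z; have [->|[a ->]] := nonbot_cases x; first by move=> _ _; rewrite meet0x ext_bot_bot.
have [->|[b ->]] := nonbot_cases y; first by move=> _ _; rewrite meetx0 ext_bot_bot.
have [->|[c ->]] := nonbot_cases z; first by rewrite ext_bot_val_bot.
rewrite ext_bot_val => Qac bc.
have [->|meet_nbot] := eqVneq (val a `&` val b) \bot; first exact: ext_bot_bot.
pose m := nonbot_of meet_nbot.
rewrite -[_ `&` _]/(val m) ext_bot_val.
by apply: (Q_restr a c b Qac bc); apply/max_common_lower_nonbot.
Qed.

Lemma ext_restr_nonbot R :
  (forall x y, R x y -> x <= y) -> (forall y, R \bot y) ->
  ext_bot (restr_nonbot R) =2 R.
Proof.
move=> R_le R_bot x y; have [->|[a ->]] := nonbot_cases x.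
  by rewrite ext_bot_bot R_bot.
have [->|[b ->]] := nonbot_cases y; last by rewrite ext_bot_val.
rewrite ext_bot_val_bot; apply/esym/negbTE/negP => /R_le.
by rewrite lex0 (negbTE (valP a)).
Qed.

Lemma restr_ext_bot Q : restr_nonbot (ext_bot Q) =2 Q.
Proof. by move=> a b; rewrite /restr_nonbot ext_bot_val. Qed.

End NonBot.

Theorem lemma4p8 (d : Order.disp_t) (P : finTBLatticeType d) :
  (forall R : rel P, transfer_system_lattice R -> (forall a, R \bot a) ->
     transfer_system_poset (@nonbot_le d P) (restr_nonbot R)) /\
  (forall Q : rel (nonbot P), transfer_system_poset (@nonbot_le d P) Q ->
     transfer_system_lattice (ext_bot Q) /\ (forall a, ext_bot Q \bot a)) /\
  (forall R : rel P, transfer_system_lattice R -> (forall a, R \bot a) ->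
     ext_bot (restr_nonbot R) =2 R) /\
  (forall Q : rel (nonbot P), transfer_system_poset (@nonbot_le d P) Q ->
     restr_nonbot (ext_bot Q) =2 Q).
Proof.
split; [|split; [|split]].
- by move=> R R_ts _; apply: restr_transfer_system.
- move=> Q Q_ts; split; first exact: ext_bot_transfer_system.
  exact: ext_bot_bot.
- by move=> R [_ R_le _]; apply: ext_restr_nonbot.
- by move=> Q _; apply: restr_ext_bot.
Qed.
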